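(* Let $a,n$ be positive integers and write $(1+y+\cdots+y^{a-1})^n=\sum_{k=0}^{n(a-1)}c_k\,y^k$. For $0\le i\le a-1$ and a polynomial $f$ of one variable of degree less than $n$, define \[\Sigma_i f(y)=\sum_{k\equiv i\ (\mathrm{mod}\ a)}c_k\,f(y-k).\] Then $\Sigma_i f(y)$ is independent of $i$, and hence \[\Sigma_i f(y)=\frac1a\,(1+S+\cdots+S^{a-1})^n f(y),\] where $S$ is the shift operator $(Sf)(y)=f(y-1)$. *)

From mathcomp Require Import all_boot all_order all_algebra.
Set Implicit Arguments. Unset Strict Implicit. Unset Printing Implicit Defensive.
Import GRing.Theory Num.Theory.
Local Open Scope ring_scope.

Definition geomP (R : numFieldType) (a : nat) : {poly R} := \sum_(j < a) 'X^j.

Definition cco (R : numFieldType) (a n k : nat) : R := ((geomP R a) ^+ n)`_k.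

Definition shiftk (R : numFieldType) (k : nat) (f : {poly R}) : {poly R} :=
  f \Po ('X - (k%:R)%:P).

Definition Sigma (R : numFieldType) (a n i : nat) (f : {poly R}) : {poly R} :=
  \sum_(k < (n * (a - 1)).+1 | (k %% a)%N == i) cco R a n k *: @shiftk R k f.

Definition Sop (R : numFieldType) (f : {poly R}) : {poly R} := f \Po ('X - 1).

Definition geomS (R : numFieldType) (a : nat) (f : {poly R}) : {poly R} :=
  \sum_(j < a) iter j (@Sop R) f.

From mathcomp Require Import all_boot all_order all_algebra.
Import GRing.Theory Num.Theory.
Set Implicit Arguments. Unset Strict Implicit. Unset Printing Implicit Defensive.
Local Open Scope ring_scope.

(* Write Q(S) f = sum_k Q_k f(y - k) for a polynomial Q (this is [hornerS Q f]).
   Shifts compose additively, so Q |-> Q(S) is multiplicative, and (S - 1)^n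
   kills every f of degree < n because S - 1 lowers the degree.  Now Sigma_i f
   is E_i(G^n)(S) f, where G = 1 + y + ... + y^(a-1) and E_i keeps the
   monomials of degree = i (mod a), while the right-hand side is (G^n/a)(S) f.
   It thus suffices that (X - 1)^n divides E_i(G^n) - G^n/a, which follows by
   induction on n: E_i(G Q) = sum_j X^j E_(i-j)(Q), each X^j = 1 mod (X - 1),
   and the differences E_m(Q) - Q/a sum to 0. *)

Lemma eqn_modBl p m n d : (m <= p)%N -> (n <= p)%N ->
  (p - m == p - n %[mod d]) = (m == n %[mod d]).
Proof.
move=> le_mp le_np; rewrite -(eqn_modDr (m + n)) addnA subnK // (addnC m).
by rewrite addnA subnK // eqn_modDl eq_sym.
Qed.

Lemma eqn_modBr p m n d : (p <= m)%N -> (p <= n)%N ->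
  (m - p == n - p %[mod d]) = (m == n %[mod d]).
Proof. by move=> le_pm le_pn; rewrite -(eqn_modDr p) !subnK. Qed.

Lemma reindex_mod_subl {V : nmodType} (a i : nat) (F : nat -> V) : (0 < a)%N ->
  \sum_(j < a) F ((i + a - j) %% a)%N = \sum_(m < a) F m.
Proof.
move=> a_gt0; pose s (j : 'I_a) := Ordinal (ltn_pmod (i + a - j) a_gt0).
have s_inj : injective s.
  move=> j k /(congr1 val)/eqP /=.
  rewrite eqn_modBl ?(leq_trans (ltnW (ltn_ord _)) (leq_addl _ _)) //.
  by rewrite !modn_small // => /eqP/val_inj.
by rewrite [RHS](reindex_inj s_inj).
Qed.

Section ShiftAction.

Variable R : numFieldType.
Implicit Types (f P Q : {poly R}) (j k : nat).

Lemma shiftk0 f : shiftk 0 f = f.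
Proof. by rewrite /shiftk subr0 comp_polyXr. Qed.

Lemma shiftkD j k f : shiftk j (shiftk k f) = shiftk (j + k) f.
Proof.
rewrite /shiftk -comp_polyA comp_polyB comp_polyX comp_polyC.
by rewrite -addrA -opprD -polyCD -natrD.
Qed.

Lemma iter_Sop j f : iter j (@Sop R) f = shiftk j f.
Proof.
elim: j => [|j IHj]; first by rewrite shiftk0.
by rewrite iterS IHj -[j.+1]add1n -shiftkD.
Qed.

Definition hornerS Q f := \sum_(k < size Q) Q`_k *: shiftk k f.

Lemma hornerS_widen N Q f : (size Q <= N)%N ->
  hornerS Q f = \sum_(k < N) Q`_k *: shiftk k f.
Proof.
move=> le_QN; rewrite /hornerS (big_ord_widen _ (fun k => Q`_k *: shiftk k f) le_QN).
rewrite big_mkcond; apply: eq_bigr => k _.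
by case: ltnP => // le_Qk; rewrite nth_default ?scale0r.
Qed.

Lemma hornerS0l f : hornerS 0 f = 0.
Proof. by rewrite /hornerS size_poly0 big_ord0. Qed.

Lemma hornerS0r Q : hornerS Q 0 = 0.
Proof. by rewrite /hornerS big1 // => k _; rewrite /shiftk comp_poly0 scaler0. Qed.

Lemma hornerSD P Q f : hornerS (P + Q) f = hornerS P f + hornerS Q f.
Proof.
pose N := maxn (size P) (size Q).
rewrite !(hornerS_widen (N := N)) ?leq_maxl ?leq_maxr ?size_polyD // -big_split.
by apply: eq_bigr => k _; rewrite coefD scalerDl.
Qed.

Lemma hornerSZ c Q f : hornerS (c *: Q) f = c *: hornerS Q f.
Proof.
rewrite (hornerS_widen (N := size Q)) ?size_scale_leq // scaler_sumr.
by apply: eq_bigr => k _; rewrite coefZ scalerA.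
Qed.

Lemma hornerS_sum (I : Type) (r : seq I) (F : I -> {poly R}) f :
  hornerS (\sum_(i <- r) F i) f = \sum_(i <- r) hornerS (F i) f.
Proof. exact: (big_morph (hornerS^~ f) (fun P Q => hornerSD P Q f) (hornerS0l f)). Qed.

Lemma hornerS1 f : hornerS 1 f = f.
Proof. by rewrite /hornerS size_poly1 big_ord1 coefC scale1r shiftk0. Qed.

Lemma hornerS_XnM j Q f : hornerS ('X^j * Q) f = shiftk j (hornerS Q f).
Proof.
have le_size : (size ('X^j * Q)%R <= j + size Q)%N.
  by rewrite (leq_trans (size_polyMleq _ _)) // size_polyXn.
rewrite (hornerS_widen (N := j + size Q)) // big_split_ord /= big1 ?add0r; last first.
  by move=> k _; rewrite coefXnM ltn_ord scale0r.
rewrite /hornerS [shiftk j _]/shiftk linear_sum; apply: eq_bigr => k _ /=.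
by rewrite coefXnM ltnNge leq_addr addKn linearZ -shiftkD.
Qed.

Lemma hornerS_Xn j f : hornerS 'X^j f = shiftk j f.
Proof. by rewrite -[_ ^+ j]mulr1 hornerS_XnM hornerS1. Qed.

Lemma hornerSM P Q f : hornerS (P * Q) f = hornerS P (hornerS Q f).
Proof.
rewrite -{1}[P]coefK poly_def mulr_suml hornerS_sum; apply: eq_bigr => j _.
by rewrite -scalerAl hornerSZ hornerS_XnM.
Qed.

Lemma hornerS_geom a f : hornerS (geomP R a) f = geomS a f.
Proof.
rewrite hornerS_sum; apply: eq_bigr => j _.
by rewrite hornerS_Xn iter_Sop.
Qed.

Lemma hornerS_geom_exp a n f : hornerS (geomP R a ^+ n) f = iter n (geomS a) f.
Proof.
elim: n => [|n IHn]; first by rewrite expr0 hornerS1.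
by rewrite exprS hornerSM IHn hornerS_geom.
Qed.

Lemma size_Sop_sub f : (size (Sop f - f)%R <= (size f).-1)%N.
Proof.
have size_XsubC1 : size ('X - 1 : {poly R}) = 2 by rewrite -polyC1 size_XsubC.
have size_Sop : size (Sop f) = size f := size_comp_poly2 f size_XsubC1.
have lead_Sop : lead_coef (Sop f) = lead_coef f.
  by rewrite lead_coef_comp ?size_XsubC1 // -polyC1 lead_coefXsubC expr1n mulr1.
apply/leq_sizeP => k; rewrite leq_eqVlt coefB => /predU1P [<- | lt_fk].
  by move: lead_Sop; rewrite /lead_coef size_Sop => ->; rewrite subrr.
by rewrite !nth_default ?subrr ?size_Sop //; move: lt_fk; case: (size f).
Qed.

Lemma hornerS_XsubC1 f : hornerS ('X - 1) f = Sop f - f.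
Proof.
rewrite hornerSD -[- 1 : {poly R}]scaleN1r hornerSZ hornerS1.
by rewrite -['X]expr1 hornerS_Xn scaleN1r.
Qed.

Lemma hornerS_XsubC1_exp_eq0 n f : (size f <= n)%N -> hornerS (('X - 1) ^+ n) f = 0.
Proof.
elim: n f => [|n IHn] f le_fn.
  by move: le_fn; rewrite leqn0 size_poly_eq0 expr0 hornerS1 => /eqP.
rewrite exprSr hornerSM hornerS_XsubC1 IHn //.
by rewrite (leq_trans (size_Sop_sub f)) // -subn1 leq_subLR add1n.
Qed.

Lemma hornerS_eq0_of_dvdp n Q f :
  ('X - 1) ^+ n %| Q -> (size f <= n)%N -> hornerS Q f = 0.
Proof.
by move=> /dvdpP [q ->] le_fn; rewrite hornerSM hornerS_XsubC1_exp_eq0 ?hornerS0r.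
Qed.

End ShiftAction.

Section Multisection.

Variables (R : numFieldType) (a : nat).
Hypothesis a_gt0 : (0 < a)%N.
Implicit Types (D P Q : {poly R}) (i j k m : nat).

Definition multisection i P : {poly R} :=
  \poly_(k < size P) (if (k %% a == i)%N then P`_k else 0).

Lemma coef_multisection i P k :
  (multisection i P)`_k = if (k %% a == i)%N then P`_k else 0.
Proof. by rewrite coef_poly; case: ltnP => // le_Pk; rewrite nth_default ?if_same. Qed.

Lemma size_multisection i P : (size (multisection i P) <= size P)%N.
Proof. exact: size_poly. Qed.

Lemma sum_multisection P : \sum_(i < a) multisection i P = P.
Proof.
apply/polyP => k; rewrite coef_sum.
under eq_bigr => i _ do rewrite coef_multisection.
by rewrite -big_mkcond (big_pred1 (Ordinal (ltn_pmod k a_gt0))).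
Qed.

(* [(i + a - j) %% a] is i - j mod a, kept clear of truncated subtraction. *)
Lemma multisection_geomM i Q : (i < a)%N ->
  multisection i (geomP R a * Q) =
    \sum_(j < a) 'X^j * multisection ((i + a - j) %% a) Q.
Proof.
move=> lt_ia; apply/polyP => k.
rewrite coef_multisection /geomP mulr_suml !coef_sum.
have class_shift (j : 'I_a) : (j <= k)%N ->
    (((k - j) %% a == (i + a - j) %% a) = (k %% a == i))%N.
  move=> le_jk; have le_j_ia : (j <= i + a)%N by rewrite ltnW ?ltn_addl.
  by rewrite eqn_modBr // modnDr (modn_small lt_ia).
case: ifP => [ki | kNi].
  apply: eq_bigr => j _; rewrite !coefXnM; case: ltnP => // le_jk.
  by rewrite coef_multisection class_shift ?ki.
rewrite big1 // => j _; rewrite coefXnM; case: ltnP => // le_jk.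
by rewrite coef_multisection class_shift ?kNi.
Qed.

Lemma dvdp_multisection_geomM D Q i : (i < a)%N ->
  (forall m, (m < a)%N -> D %| multisection m Q - a%:R^-1 *: Q) ->
  D * ('X - 1) %| multisection i (geomP R a * Q) - a%:R^-1 *: (geomP R a * Q).
Proof.
move=> lt_ia dvdDQ.
pose H m := (multisection m Q - a%:R^-1 *: Q) %/ D.
have DH m : (m < a)%N -> D * H m = multisection m Q - a%:R^-1 *: Q.
  by move=> lt_ma; rewrite mulrC divpK ?dvdDQ.
have sum_DH : \sum_(m < a) D * H m = 0.
  rewrite (eq_bigr _ (fun (m : 'I_a) _ => DH m (ltn_ord m))) sumrB sum_multisection.
  rewrite sumr_const card_ord -scaler_nat scalerA mulfV ?scale1r ?subrr //.
  by rewrite pnatr_eq0 -lt0n.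
have XsubC1_dvd j : ('X - 1 : {poly R}) %| 'X^j - 1.
  by rewrite -polyC1 dvdp_XsubCl /root !hornerE expr1n subrr.
have -> : multisection i (geomP R a * Q) - a%:R^-1 *: (geomP R a * Q) =
    \sum_(j < a) D * (('X^j - 1) * H ((i + a - j) %% a)%N) + \sum_(m < a) D * H m.
  rewrite -(reindex_mod_subl i (fun m => D * H m) a_gt0) -big_split.
  rewrite multisection_geomM //.
  rewrite /geomP mulr_suml scaler_sumr -sumrB; apply: eq_bigr => j _ /=.
  rewrite scalerAr -mulrBr -DH ?ltn_pmod //.
  by rewrite mulrBl mul1r mulrBr subrK mulrCA.
rewrite sum_DH addr0; apply: (big_ind (fun p => D * ('X - 1) %| p)) => [|p q|j _];
  [exact: dvdp0 | exact: dvdp_add |].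
by rewrite dvdp_mul ?dvdpp ?dvdp_mulr.
Qed.

Lemma dvdp_multisection_geom_exp n i : (i < a)%N ->
  ('X - 1) ^+ n %| multisection i (geomP R a ^+ n) - a%:R^-1 *: geomP R a ^+ n.
Proof.
elim: n i => [|n IHn] i lt_ia; first by rewrite expr0 dvd1p.
by rewrite exprSr [geomP R a ^+ _]exprS dvdp_multisection_geomM.
Qed.

End Multisection.

Lemma size_geomP (R : numFieldType) a : (size (geomP R a) <= a)%N.
Proof.
rewrite /geomP (eq_bigr (fun j : 'I_a => 1 *: 'X^j)) => [|j _]; last by rewrite scale1r.
by rewrite -(poly_def a (fun=> 1)) size_poly.
Qed.

Lemma size_geomP_exp (R : numFieldType) a n :
  (size (geomP R a ^+ n) <= (n * (a - 1)).+1)%N.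
Proof.
rewrite (leq_trans (size_poly_exp_leq _ _)) // ltnS mulnC leq_mul2l.
by rewrite -subn1 leq_sub2r ?size_geomP ?orbT.
Qed.

Lemma Sigma_hornerS (R : numFieldType) a n i (f : {poly R}) :
  Sigma a n i f = hornerS (multisection a i (geomP R a ^+ n)) f.
Proof.
rewrite (hornerS_widen (N := (n * (a - 1)).+1)); last first.
  exact: leq_trans (size_multisection _ _ _) (size_geomP_exp _ _ _).
rewrite /Sigma big_mkcond; apply: eq_bigr => k _.
by rewrite coef_multisection /cco; case: ifP => //; rewrite scale0r.
Qed.

Theorem lemma2p2 (R : numFieldType) (a n : nat) (f : {poly R}) :
  (0 < a)%N -> (0 < n)%N -> (size f <= n)%N ->
  (forall i j, (i < a)%N -> (j < a)%N -> Sigma a n i f = Sigma a n j f) /\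
  (forall i, (i < a)%N -> Sigma a n i f = (a%:R)^-1 *: iter n (@geomS R a) f).
Proof.
move=> a_gt0 _ le_fn.
have Sigma_eq i : (i < a)%N -> Sigma a n i f = a%:R^-1 *: iter n (geomS a) f.
  move=> lt_ia; rewrite Sigma_hornerS.
  rewrite -[multisection _ _ _](subrK (a%:R^-1 *: geomP R a ^+ n)) hornerSD.
  rewrite (hornerS_eq0_of_dvdp _ le_fn) ?dvdp_multisection_geom_exp //.
  by rewrite add0r hornerSZ hornerS_geom_exp.
by split=> [i j lt_ia lt_ja | //]; rewrite !Sigma_eq.
Qed.
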